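(* Let $n\ge 7$ and let $G\in B^{++}_n$. (1) $\mathrm{irr}_t(G)\ge 2n-4$. Equality holds if and only if the degree sequence of $G$ is $(3,3,2,\ldots,2)$, i.e. two vertices of degree $3$ and $n-2$ vertices of degree $2$. (2) If the degree sequence of $G$ is not $(3,3,2,\ldots,2)$, then $\mathrm{irr}_t(G)\ge 4n-10$. Equality holds if and only if the degree sequence of $G$ is $(3,3,3,2,\ldots,2,1)$, i.e. three vertices of degree $3$, $n-4$ vertices of degree $2$ and one vertex of degree $1$.
   Context: A bicyclic graph is a simple connected graph whose number of edges equals its number of vertices plus one. For a graph $G=(V,E)$ and $w\in V$, $d_G(w)$ is the degree of $w$. The total irregularity is $\mathrm{irr}_t(G)=\frac12\sum_{x,y\in V}|d_G(x)-d_G(y)|$, where the sum runs over all ordered pairs of vertices. Degree sequences are listed in nonincreasing order. For $p,q\ge 3$ and $l\ge 1$, the $\infty$-graph $\infty(p,q,l)$ is obtained from two vertex-disjoint cycles $C_p$ and $C_q$ by joining a vertex of $C_p$ and a vertex of $C_q$ with a path having $l$ vertices (i.e. length $l-1$). $B^{++}_n$ denotes the set of bicyclic graphs on $n$ vertices obtained from some $\infty(p,q,l)$ with $l\ge 2$ by attaching trees. Equivalently, these are the bicyclic graphs on $n$ vertices whose two cycles are vertex-disjoint. *)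

From mathcomp Require Import all_boot.
Set Implicit Arguments. Unset Strict Implicit. Unset Printing Implicit Defensive.

Definition simple_graph (T : finType) (e : rel T) : Prop :=
  symmetric e /\ irreflexive e.

Definition connected (T : finType) (e : rel T) : Prop :=
  forall x y : T, connect e x y.

Definition num_edges (T : finType) (e : rel T) : nat :=
  #|[set p : T * T | e p.1 p.2]| %/ 2.

Definition bicyclic (T : finType) (e : rel T) : Prop :=
  [/\ simple_graph e, connected e & num_edges e = #|T|.+1].

Definition is_graph_cycle (T : finType) (e : rel T) (c : seq T) : bool :=
  [&& 3 <= size c, uniq c & cycle e c].

Definition Bpp (T : finType) (e : rel T) : Prop :=
  bicyclic e /\
  exists c1 c2 : seq T,
    [/\ is_graph_cycle e c1, is_graph_cycle e c2 & [disjoint c1 & c2]].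

Definition deg (T : finType) (e : rel T) (x : T) : nat := #|[set y | e x y]|.

Definition absdiff (a b : nat) : nat := (a - b) + (b - a).

(* total irregularity: 1/2 sum over ordered pairs |d(x)-d(y)| (sum is even) *)
Definition irr_t (T : finType) (e : rel T) : nat :=
  (\sum_(x : T) \sum_(y : T) absdiff (deg e x) (deg e y)) %/ 2.

Definition degseq (T : finType) (e : rel T) : seq nat :=
  sort geq [seq deg e x | x <- enum T].

From mathcomp Require Import all_boot zify.

Set Implicit Arguments.
Unset Strict Implicit.
Unset Printing Implicit Defensive.

(* Let c1, c2 and k count the vertices of degree 1, 2 and >= 3, and let
   X = sum_v (d(v) - 2)^+ be the excess degree.  The handshake lemma gives
   sum_v d(v) = 2n + 2, i.e. X = c1 + 2.  Since G is connected, each of the two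
   disjoint cycles carries a vertex of degree >= 3, so 2 <= k <= X.  Counting
   only the pairs that contain a vertex of degree 2, or a vertex of degree 1 and
   one of degree >= 3, gives irr_t(G) >= c2 (c1 + X) + 2 c1 k.  If c1 = 0 then
   k = X = 2, which forces the degree sequence (3,3,2,...,2); if c1 = 1 then
   either k = X = 3, forcing (3,3,3,2,...,2,1), or the bound gives 4n - 8; if
   c1 >= 2 it gives 4n - 9.  The two extremal sequences have irr_t equal to
   2n - 4 and 4n - 10. *)

Definition sum_absdiff (s : seq nat) : nat :=
  \sum_(a <- s) \sum_(b <- s) absdiff a b.

Lemma perm_sum_absdiff s t : perm_eq s t -> sum_absdiff s = sum_absdiff t.
Proof.
move=> st; rewrite /sum_absdiff (perm_big _ st) /=.
by apply: eq_bigr => a _; rewrite (perm_big _ st).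
Qed.

Definition excess (s : seq nat) : nat := \sum_(b <- s) (b - 2).

Section PositiveSeq.
Variable s : seq nat.
Hypothesis s_pos : all (leq 1) s.

Lemma size_by_degree :
  size s = count_mem 1 s + count_mem 2 s + count (leq 3) s.
Proof.
elim: s s_pos => [|x t IH] //= /andP [x_pos /IH ->].
by case: x x_pos => [|[|[|x]]] //= _; lia.
Qed.

Lemma sum_absdiff2 : \sum_(b <- s) absdiff b 2 = count_mem 1 s + excess s.
Proof.
rewrite /excess; elim: s s_pos => [|x t IH] /=; first by rewrite !big_nil.
move=> /andP [x_pos /IH t_eq]; rewrite !big_cons t_eq /absdiff.
by case: x x_pos => [|[|[|x]]] //= _; lia.
Qed.

Lemma sum_excess : \sum_(b <- s) b + count_mem 1 s = excess s + 2 * size s.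
Proof.
rewrite /excess; elim: s s_pos => [|x t IH] /=; first by rewrite !big_nil.
move=> /andP [x_pos /IH]; rewrite !big_cons.
by case: x x_pos => [|[|[|x]]] //= _; lia.
Qed.

End PositiveSeq.

Lemma count_geq3_le_excess s : count (leq 3) s <= excess s.
Proof.
rewrite /excess; elim: s => [|x t IH] /=; first by rewrite big_nil.
by rewrite big_cons; case: x => [|[|[|x]]] /=; lia.
Qed.

Lemma count_geq3_eq_excess s : count (leq 3) s = excess s -> all (geq 3) s.
Proof.
rewrite /excess; elim: s => [|x t IH] //=; rewrite big_cons => eq_x.
have := count_geq3_le_excess t; rewrite /excess => le_t.
have x_le3 : x <= 3 by move: eq_x; case: x => [|[|[|[|x]]]] /=; lia.
rewrite x_le3 IH //; move: eq_x x_le3; case: x => [|[|[|[|x]]]] /=; lia.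
Qed.

Definition absdiff_lower (a b : nat) : nat :=
  (a == 2) * absdiff b 2 + (b == 2) * absdiff a 2 +
  2 * ((a == 1) * (3 <= b)) + 2 * ((3 <= a) * (b == 1)).

Lemma absdiff_lower_le a b : absdiff_lower a b <= absdiff a b.
Proof. by rewrite /absdiff_lower /absdiff; case: a => [|[|[|a]]]; case: b => [|[|[|b]]] /=; lia. Qed.

Lemma sum_absdiff_lower (u t : seq nat) :
  \sum_(a <- u) \sum_(b <- t) absdiff_lower a b =
     count_mem 2 u * \sum_(b <- t) absdiff b 2
   + count_mem 2 t * \sum_(a <- u) absdiff a 2
   + 2 * (count_mem 1 u * count (leq 3) t)
   + 2 * (count (leq 3) u * count_mem 1 t).
Proof.
have inner a : \sum_(b <- t) absdiff_lower a b =
     (a == 2) * \sum_(b <- t) absdiff b 2 + count_mem 2 t * absdiff a 2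
   + 2 * ((a == 1) * count (leq 3) t) + 2 * ((3 <= a) * count_mem 1 t).
  elim: t => [|x t IH]; first by rewrite !big_nil /=; lia.
  by rewrite !big_cons IH /= /absdiff_lower; lia.
elim: u => [|x u IH]; first by rewrite !big_nil /=; lia.
by rewrite !big_cons IH inner /=; lia.
Qed.

Lemma sum_absdiff_ge (s : seq nat) :
  2 * (count_mem 2 s * \sum_(b <- s) absdiff b 2 + 2 * (count_mem 1 s * count (leq 3) s))
    <= sum_absdiff s.
Proof.
apply: (@leq_trans (\sum_(a <- s) \sum_(b <- s) absdiff_lower a b)).
  by rewrite sum_absdiff_lower; lia.
by apply: leq_sum => a _; apply: leq_sum => b _; apply: absdiff_lower_le.
Qed.

Lemma half_sum_absdiff_ge (s : seq nat) : all (leq 1) s ->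
  count_mem 2 s * (count_mem 1 s + excess s) + 2 * (count_mem 1 s * count (leq 3) s)
    <= sum_absdiff s %/ 2.
Proof. by move=> s_pos; rewrite leq_divRL // mulnC -sum_absdiff2 ?sum_absdiff_ge. Qed.

Lemma geq_total : total geq.
Proof. by move=> x y; apply: leq_total. Qed.

Lemma geq_trans : transitive geq.
Proof. by move=> x y z le_yx le_zy; apply: leq_trans le_zy le_yx. Qed.

Lemma geq_anti : antisymmetric geq.
Proof. by move=> x y le_xy; apply/eqP; rewrite eqn_leq andbC. Qed.

Lemma sorted_geq_nseq_cat m x (s : seq nat) :
  all (geq x) s -> sorted geq s -> sorted geq (nseq m x ++ s).
Proof.
move=> le_s sorted_s; elim: m => [|m IH] //=.
by rewrite (path_sortedE geq_trans) IH andbT all_cat all_nseq /= leqnn orbT.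
Qed.

Definition seq123 (a b c : nat) : seq nat := nseq c 3 ++ nseq b 2 ++ nseq a 1.

Lemma sorted_seq123 a b c : sorted geq (seq123 a b c).
Proof.
rewrite /seq123 !sorted_geq_nseq_cat ?all_cat ?all_nseq ?orbT //.
by rewrite -[nseq a 1]cats0 sorted_geq_nseq_cat.
Qed.

Lemma sort_seq123 (s : seq nat) a b c :
  perm_eq s (seq123 a b c) -> sort geq s = seq123 a b c.
Proof.
move=> /(perm_sortP geq_total geq_trans geq_anti) ->.
exact: (sorted_sort geq_trans (sorted_seq123 a b c)).
Qed.

Lemma perm_seq123 (s : seq nat) : all (leq 1) s -> all (geq 3) s ->
  perm_eq s (seq123 (count_mem 1 s) (count_mem 2 s) (count_mem 3 s)).
Proof.
move=> /allP ge1 /allP le3; apply/allP => x.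
have : x \in s -> [|| x == 1, x == 2 | x == 3].
  by move=> x_s; move: (ge1 x x_s) (le3 x x_s); case: x {x_s} => [|[|[|[|x]]]].
rewrite /seq123 !mem_cat !mem_nseq => x123 x_in.
have {x123 x_in} : [|| x == 1, x == 2 | x == 3].
  by case/orP: x_in => [/x123 //|]; case/or3P => /andP [_ ->]; rewrite ?orbT.
rewrite /= !count_cat !count_nseq.
by case/or3P => /eqP -> /=; rewrite ?mul0n ?mul1n ?addn0 ?add0n.
Qed.

Lemma sum_absdiff_seq123 a b c :
  sum_absdiff (seq123 a b c) = 2 * (a * b + 2 * (a * c) + b * c).
Proof.
by rewrite /sum_absdiff /seq123 !big_cat !big_nseq !iter_addn_0 /= !big_cat !big_nseq
  !iter_addn_0 /absdiff /=; lia.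
Qed.

Lemma sort_geq_count_eq_excess (s : seq nat) :
  all (leq 1) s -> count (leq 3) s = excess s ->
  sort geq s = seq123 (count_mem 1 s) (count_mem 2 s) (count (leq 3) s).
Proof.
move=> s_pos /count_geq3_eq_excess s_le3.
suff -> : count (leq 3) s = count_mem 3 s by apply/sort_seq123/perm_seq123.
by apply/eq_in_count => x /(allP s_le3) /= x_le3; rewrite eqn_leq x_le3.
Qed.

Lemma half_sum_absdiff_sort (s : seq nat) a b c : sort geq s = seq123 a b c ->
  sum_absdiff s %/ 2 = a * b + 2 * (a * c) + b * c.
Proof.
move=> sort_s; rewrite (@perm_sum_absdiff s (seq123 a b c)) ?sum_absdiff_seq123 ?mulKn //.
by rewrite -sort_s perm_sym perm_sort.
Qed.

Lemma bicyclic_degseq_cases n (s : seq nat) :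
  7 <= n -> size s = n -> all (leq 1) s -> \sum_(d <- s) d = 2 * n + 2 ->
  2 <= count (leq 3) s ->
  [\/ sort geq s = seq123 0 (n - 2) 2, sort geq s = seq123 1 (n - 4) 3
    | 4 * n - 9 <= sum_absdiff s %/ 2].
Proof.
move=> n_ge7 size_s s_pos sum_s big_ge2.
have irr_ge := half_sum_absdiff_ge s_pos.
have := size_by_degree s_pos; have := sum_excess s_pos.
have k_le := count_geq3_le_excess s; have tight := sort_geq_count_eq_excess s_pos.
set c1 := count_mem 1 s in irr_ge tight *; set c2 := count_mem 2 s in irr_ge tight *.
set k := count (leq 3) s in irr_ge tight k_le big_ge2 *; set X := excess s in irr_ge tight k_le *.
rewrite size_s sum_s => sum_eq size_eq.
have X_eq : X = c1 + 2 by lia.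
case: (ltngtP c1 1) => [c1_0|c1_ge2|c1_1].
- by apply: Or31; rewrite tight; [congr seq123|]; lia.
- by apply: Or33; apply: leq_trans irr_ge; rewrite X_eq; nia.
have [k_3|k_ne3] := eqVneq k 3.
  by apply: Or32; rewrite tight; [congr seq123|]; lia.
by apply: Or33; apply: leq_trans irr_ge; rewrite X_eq c1_1; nia.
Qed.

Lemma irr_t_sum_absdiff (T : finType) (e : rel T) :
  irr_t e = sum_absdiff [seq deg e x | x <- enum T] %/ 2.
Proof.
rewrite /irr_t /sum_absdiff big_map big_enum /=; congr (_ %/ 2).
by apply: eq_bigr => x _; rewrite big_map big_enum.
Qed.

Lemma deg_sum (T : finType) (e : rel T) x : deg e x = \sum_y (e x y : nat).
Proof. by rewrite /deg -sum1dep_card big_mkcond; apply: eq_bigr => y _; case: (e x y). Qed.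

Lemma leq_size_deg (T : finType) (e : rel T) v (s : seq T) :
  uniq s -> {subset s <= e v} -> size s <= deg e v.
Proof.
move=> uniq_s sub_s; rewrite /deg cardE; apply: uniq_leq_size => // y /sub_s.
by rewrite mem_enum inE.
Qed.

Lemma deg_gt0 (T : finType) (e : rel T) x y : x != y -> connect e x y -> 0 < deg e x.
Proof.
move=> neq_xy /connectP [[|z p] /= path_p last_p]; first by rewrite last_p eqxx in neq_xy.
case/andP: path_p => exz _.
by apply: (@leq_size_deg _ e x [:: z]) => // w; rewrite inE => /eqP ->.
Qed.

Lemma graph_cycle_mem (T : finType) (e : rel T) c : is_graph_cycle e c -> exists x, x \in c.
Proof. by case/and3P; case: c => // x c _ _ _; exists x; rewrite inE eqxx. Qed.

Section SimpleGraph.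
Variables (T : finType) (e : rel T).
Hypotheses (e_sym : symmetric e) (e_irr : irreflexive e).

Lemma handshake : \sum_x deg e x = 2 * num_edges e.
Proof.
pose half := \sum_x \sum_y ((enum_rank x < enum_rank y) && e x y : nat).
have split_e x y : (e x y : nat) =
    ((enum_rank x < enum_rank y) && e x y) + ((enum_rank y < enum_rank x) && e x y).
  case: ltngtP => [||/val_inj/enum_rank_inj ->]; rewrite ?addn0 ?e_irr //.
have sum_deg : \sum_x deg e x = 2 * half.
  under eq_bigr => x _ do rewrite deg_sum (eq_bigr _ (fun y _ => split_e x y)) big_split.
  rewrite big_split /= [X in _ + X]exchange_big /= mul2n -addnn.
  by congr (_ + _); apply: eq_bigr => x _; apply: eq_bigr => y _; rewrite e_sym.
have pairs : #|[set p : T * T | e p.1 p.2]| = \sum_x deg e x.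
  rewrite -sum1dep_card big_mkcond -(pair_big xpredT xpredT (fun x y => (e x y : nat))) /=.
  by apply: eq_bigr => x _; rewrite deg_sum; apply: eq_bigr => y _; case: (e x y).
by rewrite /num_edges pairs sum_deg mulKn.
Qed.

Lemma cycle_neighbours (c : seq T) v : is_graph_cycle e c -> v \in c ->
  exists a b, [/\ a \in c, b \in c, a != b, e v a & e v b].
Proof.
case/and3P => size_c uniq_c cycle_c /rot_to [i t rot_c].
have : [&& 3 <= size (v :: t), uniq (v :: t) & cycle e (v :: t)].
  by rewrite -rot_c size_rot rot_uniq rot_cycle size_c uniq_c.
have in_c z : z \in t -> z \in c by move=> z_t; rewrite -(mem_rot i) rot_c inE z_t orbT.
case: t rot_c in_c => [|a t] // _ in_c; case/lastP: t in_c => [|t b] // in_c.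
rewrite /= rcons_path last_rcons mem_rcons inE negb_or.
case/and4P => _ /and3P [_ /andP [neq_ab _] _] eva /andP [_ ebv].
exists a, b; split; rewrite ?in_c ?inE ?mem_rcons ?inE ?eqxx ?orbT //.
by rewrite e_sym.
Qed.

Lemma cycle_branch_vertex (c : seq T) y :
  connected e -> is_graph_cycle e c -> y \notin c ->
  exists2 v, v \in c & 3 <= deg e v.
Proof.
move=> conn_e cyc_c y_c.
have [x0 x0_c] := graph_cycle_mem cyc_c.
case: (boolP [exists x, exists z, [&& e x z, x \in c & z \notin c]]); last first.
  move=> no_exit; suff closed_c : closed e (mem c).
    by have := closed_connect closed_c (conn_e x0 y); rewrite x0_c (negbTE y_c).
  have stay x z : e x z -> x \in c -> z \in c.
    move=> exz x_c; apply: contraNT no_exit => z_c.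
    by apply/existsP; exists x; apply/existsP; exists z; rewrite exz x_c.
  by move=> x z exz; apply/idP/idP; apply: stay; rewrite // e_sym.
case/existsP => x /existsP [z /and3P [exz x_c z_c]].
case: (cycle_neighbours cyc_c x_c) => a [b [a_c b_c neq_ab exa exb]].
exists x => //; apply: (@leq_size_deg _ e x [:: a; b; z]).
  by rewrite /= !inE negb_or neq_ab (memPn z_c a a_c) (memPn z_c b b_c).
by move=> w; rewrite !inE => /or3P [] /eqP ->.
Qed.

End SimpleGraph.

Lemma Bpp_degrees (T : finType) (e : rel T) : 1 < #|T| -> Bpp e ->
  let s := [seq deg e x | x <- enum T] in
  [/\ all (leq 1) s, \sum_(d <- s) d = 2 * #|T| + 2 & 2 <= count (leq 3) s].
Proof.
move=> T_gt1 [[[e_sym e_irr] conn_e edges_e] [c1 [c2 [cyc1 cyc2 disj]]]] s; split.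
- apply/allP => _ /mapP [x _ ->].
  have /card_gt0P [y] : 0 < #|[set~ x]| by rewrite cardsC1 ltn_predRL.
  by rewrite !inE eq_sym => /deg_gt0; apply.
- by rewrite big_map big_enum /= handshake // edges_e mulnSr.
have [y1 y1_c1] := graph_cycle_mem cyc1; have [y2 y2_c2] := graph_cycle_mem cyc2.
have [u u_c1 u_big] := cycle_branch_vertex e_sym conn_e cyc1 (negbT (disjointFl disj y2_c2)).
have [v v_c2 v_big] := cycle_branch_vertex e_sym conn_e cyc2 (negbT (disjointFr disj y1_c1)).
have neq_uv : u != v by apply: contraTneq v_c2 => <-; rewrite (disjointFr disj u_c1).
rewrite /s count_map -size_filter; apply: (@uniq_leq_size _ [:: u; v]) => [|w].
  by rewrite /= inE neq_uv.
by rewrite !inE mem_filter mem_enum andbT /= => /orP [] /eqP ->.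
Qed.

Theorem theorem13 (n : nat) (e : rel 'I_n) :
  7 <= n -> Bpp e ->
  [/\ 2 * n - 4 <= irr_t e,
      irr_t e = 2 * n - 4 <-> degseq e = [:: 3; 3] ++ nseq (n - 2) 2,
      degseq e <> [:: 3; 3] ++ nseq (n - 2) 2 -> 4 * n - 10 <= irr_t e &
      degseq e <> [:: 3; 3] ++ nseq (n - 2) 2 ->
        (irr_t e = 4 * n - 10 <->
         degseq e = [:: 3; 3; 3] ++ nseq (n - 4) 2 ++ [:: 1])].
Proof.
move=> n_ge7 Bpp_e.
have n_gt1 : 1 < #|'I_n| by rewrite card_ord; lia.
have [s_pos s_sum s_big] := Bpp_degrees n_gt1 Bpp_e.
rewrite card_ord in s_sum.
rewrite irr_t_sum_absdiff /degseq; set s := [seq deg e x | x <- enum 'I_n] in s_pos s_sum s_big *.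
have size_s : size s = n by rewrite size_map size_enum_ord.
have irr_min : sort geq s = seq123 0 (n - 2) 2 -> sum_absdiff s %/ 2 = 2 * n - 4.
  by move/half_sum_absdiff_sort ->; lia.
have irr_next : sort geq s = seq123 1 (n - 4) 3 -> sum_absdiff s %/ 2 = 4 * n - 10.
  by move/half_sum_absdiff_sort ->; lia.
have cases := bicyclic_degseq_cases n_ge7 size_s s_pos s_sum s_big.
have -> : [:: 3; 3] ++ nseq (n - 2) 2 = seq123 0 (n - 2) 2 by rewrite /seq123 cats0.
have -> : [:: 3; 3; 3] ++ nseq (n - 4) 2 ++ [:: 1] = seq123 1 (n - 4) 3 by [].
split.
- by case: cases => [/irr_min|/irr_next|]; lia.
- split=> [irr_eq|/irr_min //]; case: cases => [//|/irr_next|]; lia.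
- by move=> not_min; case: cases => [/not_min|/irr_next|]; lia.
- move=> not_min; split=> [irr_eq|/irr_next //].
  by case: cases => [/not_min|//|]; lia.
Qed.
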